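(* Let $k>1$, let $f$ be a positive function on $\mathbb{R}$, differentiable on $[0,1]$, and define $g(R)=\dfrac{k-1}{\frac{k-1}{k}-R}$ for $R\neq\frac{k-1}{k}$. Consider the planar system $$\frac{dI}{d\tau}=I\,[f(R)(1-I-R)-k],\qquad \frac{dR}{d\tau}=(k-1)I-R.$$ If $f(R)>g(R)$ for some $R\in\left[0,\frac{k-1}{k}\right)$, then the system has at least one endemic equilibrium point $(I^*,R^* )$ with $R^*\in\left(R,\frac{k-1}{k}\right)$ and $I^*\in\left(\frac{R}{k-1},\frac1k\right)$. In particular, if $f(0)>k$, there exists at least one endemic equilibrium.
   Context: An endemic equilibrium is an equilibrium point $(I^*,R^* )$ of the system with $I^*>0$. *)

From Stdlib Require Import Reals.
From Coquelicot Require Import Coquelicot.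
Open Scope R_scope.

Definition g (k r : R) : R := (k - 1) / ((k - 1) / k - r).

Definition dI (f : R -> R) (k I r : R) : R := I * (f r * (1 - I - r) - k).
Definition dR (k I r : R) : R := (k - 1) * I - r.

Definition equilibrium (f : R -> R) (k I r : R) : Prop :=
  dI f k I r = 0 /\ dR k I r = 0.

Definition endemic_equilibrium (f : R -> R) (k I r : R) : Prop :=
  equilibrium f k I r /\ 0 < I.

From Stdlib Require Import Reals Lra Ranalysis5.
From Coquelicot Require Import Coquelicot.
Open Scope R_scope.

(* At an equilibrium [R = (k - 1) I], and for [I > 0] the first equation
   becomes [f R ((k - 1)/k - R) = k - 1], i.e. [f R = g R].  The defect
   [k - 1 - f R ((k - 1)/k - R)] is continuous, negative at any [R] with
   [f R > g R] and equal to [k - 1 > 0] at [R = (k - 1)/k], so the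
   intermediate value theorem yields a root in between.  Since [g 0 = k],
   the condition [f 0 > k] is the case [R = 0]. *)

Definition equilibrium_defect (f : R -> R) (k r : R) : R :=
  k - 1 - f r * ((k - 1) / k - r).

Lemma IVT_open (h : R -> R) (a b : R) :
  a < b -> (forall x, a <= x <= b -> continuity_pt h x) ->
  h a < 0 -> 0 < h b -> exists z, a < z < b /\ h z = 0.
Proof.
  intros Hab Hcont Ha Hb.
  destruct (IVT_interv h a b Hcont Hab Ha Hb) as [z [[Haz Hzb] Hz]].
  exists z; split; [split | exact Hz].
  - destruct Haz as [Hlt | ->]; lra.
  - destruct Hzb as [Hlt | <-]; lra.
Qed.

Lemma continuity_pt_equilibrium_defect (f : R -> R) (k r : R) :
  continuity_pt f r -> continuity_pt (equilibrium_defect f k) r.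
Proof.
  intro Hf; unfold equilibrium_defect.
  apply continuity_pt_minus; [apply continuity_pt_const; now intros u v |].
  apply continuity_pt_mult; [exact Hf |].
  apply continuity_pt_minus; [apply continuity_pt_const; now intros u v |].
  apply continuity_pt_id.
Qed.

Lemma equilibrium_defect_neg (f : R -> R) (k r : R) :
  r < (k - 1) / k -> f r > g k r -> equilibrium_defect f k r < 0.
Proof.
  intros Hr Hg; unfold g in Hg; unfold equilibrium_defect.
  set (d := (k - 1) / k - r) in *.
  apply Rmult_gt_compat_r with (r := d) in Hg; [| unfold d; lra].
  replace ((k - 1) / d * d) with (k - 1) in Hg by (field; unfold d; lra).
  lra.
Qed.

Lemma equilibrium_defect_top (f : R -> R) (k : R) :
  equilibrium_defect f k ((k - 1) / k) = k - 1.
Proof. unfold equilibrium_defect; ring. Qed.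

Lemma endemic_equilibrium_of_defect_root (f : R -> R) (k z : R) :
  1 < k -> 0 < z -> equilibrium_defect f k z = 0 ->
  endemic_equilibrium f k (z / (k - 1)) z.
Proof.
  unfold equilibrium_defect, endemic_equilibrium, equilibrium, dI, dR.
  intros Hk Hz Hroot.
  assert (Hfactor : 1 - z / (k - 1) - z = ((k - 1) / k - z) * (k / (k - 1)))
    by (field; lra).
  repeat split.
  - rewrite Hfactor, <- Rmult_assoc.
    replace (f z * ((k - 1) / k - z)) with (k - 1) by lra.
    field; lra.
  - field; lra.
  - apply Rdiv_lt_0_compat; lra.
Qed.

Lemma div_pred_lt_compat (k r z : R) :
  1 < k -> r < z < (k - 1) / k -> r / (k - 1) < z / (k - 1) < 1 / k.
Proof.
  intros Hk [Hrz Hzc].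
  replace (1 / k) with ((k - 1) / k / (k - 1)) by (field; lra).
  assert (Hinv : 0 < / (k - 1)) by (apply Rinv_0_lt_compat; lra).
  split; apply Rmult_lt_compat_r; assumption.
Qed.

Lemma g_at_0 (k : R) : 1 < k -> g k 0 = k.
Proof. intro Hk; unfold g; field; lra. Qed.

Lemma endemic_equilibrium_above (k : R) (f : R -> R) (r : R) :
  1 < k ->
  (forall x : R, 0 <= x <= 1 -> ex_derive f x) ->
  0 <= r < (k - 1) / k -> f r > g k r ->
  exists Is Rs : R,
    endemic_equilibrium f k Is Rs /\
    r < Rs < (k - 1) / k /\
    r / (k - 1) < Is < 1 / k.
Proof.
  intros Hk Hd Hr Hg.
  assert (Hc1 : (k - 1) / k < 1).
  { assert (Hinv : 0 < / k) by (apply Rinv_0_lt_compat; lra).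
    replace ((k - 1) / k) with (1 - / k) by (field; lra); lra. }
  assert (Hcont : forall x, r <= x <= (k - 1) / k ->
                    continuity_pt (equilibrium_defect f k) x).
  { intros x Hx.
    apply continuity_pt_equilibrium_defect, derivable_continuous_pt,
      ex_derive_Reals_0, Hd; lra. }
  assert (Hneg := equilibrium_defect_neg f k r ltac:(lra) Hg).
  assert (Hpos : 0 < equilibrium_defect f k ((k - 1) / k))
    by (rewrite equilibrium_defect_top; lra).
  destruct (IVT_open _ r ((k - 1) / k) ltac:(lra) Hcont Hneg Hpos) as [z [Hz Hroot]].
  exists (z / (k - 1)), z.
  split; [| split; [exact Hz |]].
  - apply endemic_equilibrium_of_defect_root; [assumption | lra | exact Hroot].
  - apply div_pred_lt_compat; assumption.
Qed.

Theorem theorem2 (k : R) (f : R -> R) :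
  1 < k ->
  (forall x : R, 0 < f x) ->
  (forall x : R, 0 <= x <= 1 -> ex_derive f x) ->
  (forall r : R, 0 <= r < (k - 1) / k -> f r > g k r ->
     exists Is Rs : R,
       endemic_equilibrium f k Is Rs /\
       r < Rs < (k - 1) / k /\
       r / (k - 1) < Is < 1 / k)
  /\
  (f 0 > k -> exists Is Rs : R, endemic_equilibrium f k Is Rs).
Proof.
  intros Hk _ Hd.
  split.
  - intros r Hr Hg; exact (endemic_equilibrium_above k f r Hk Hd Hr Hg).
  - intro Hf0.
    assert (Hc0 : 0 < (k - 1) / k) by (apply Rdiv_lt_0_compat; lra).
    assert (Hg0 : f 0 > g k 0) by (rewrite g_at_0; assumption).
    destruct (endemic_equilibrium_above k f 0 Hk Hd ltac:(lra) Hg0)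
      as [Is [Rs [Heq _]]].
    now exists Is, Rs.
Qed.
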